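(* Let $E\to M$ be a vector bundle with nondegenerate symmetric fiber metric $h$ and metric connection $\nabla$, and consider the Rothstein–Poisson bracket on $\Gamma^\infty(\bigwedge^\bullet\tau^\sharp E)$. Let $u_1,\dots,u_K$ be a local frame of $E$ such that the functions $h_{AB}=h(u_A,u_B)$ are constant, and define the local sections $$r_i=p_i-\tfrac12\tau^\sharp\big(h^{AB}\Gamma^C_{iA}u_B\wedge u_C\big).$$ Then $\{q^i,r_j\}=\delta^i_j$, $\{\tau^\sharp u_A,\tau^\sharp u_B\}=h_{AB}$, and $\{q^i,q^j\}=\{q^i,\tau^\sharp u_A\}=\{r_i,r_j\}=\{r_i,\tau^\sharp u_A\}=0$.
   Context: $\tau:T^\ast M\to M$ is the cotangent projection, $(q^i,p_i)$ the bundle coordinates on $T^\ast M$ induced by local coordinates $x^i$ on $M$, $\tau^\sharp E$ the pullback bundle with pullback connection $\tau^\sharp\nabla$, and $\tau^\sharp u_A$ the pullback frame. $(h^{AB})$ is the inverse matrix of $(h_{AB})$, $\Gamma^B_{iA}$ the Christoffel symbols ($\nabla_{\partial/\partial x^i}u_A=\Gamma^B_{iA}u_B$), $R^C_{Aij}$ the curvature components ($R(\partial_i,\partial_j)u_A=R^C_{Aij}u_C$), $u^A$ the dual frame. For $\sigma\in E^\ast$, $i(\sigma)$ is the left interior product on $\bigwedge^\bullet E$ and $j(\sigma)\psi=(-1)^{m-1}i(\sigma)\psi$ for $\psi$ of Grassmann degree $m$; $\partial\varphi/\partial p_i:=(\tau^\sharp\nabla)_{\partial/\partial p_i}\varphi$.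 The Rothstein–Poisson bracket is the super-Poisson bracket on $\Gamma^\infty(\bigwedge^\bullet\tau^\sharp E)$ (functions on $T^\ast M$ included in degree $0$) given locally by $\{\varphi,\psi\}=(\tau^\sharp\nabla)_{\partial/\partial q^i}\varphi\wedge\frac{\partial\psi}{\partial p_i}-\frac{\partial\varphi}{\partial p_i}\wedge(\tau^\sharp\nabla)_{\partial/\partial q^i}\psi-\frac12\tau^\sharp(h^{AB}R^C_{Aij}u_B\wedge u_C)\wedge\frac{\partial\varphi}{\partial p_i}\wedge\frac{\partial\psi}{\partial p_j}+h_{AB}\,j(u^A)\varphi\wedge i(u^B)\psi$. *)

From HB Require Import structures.
From mathcomp Require Import all_boot all_order all_algebra.
From mathcomp Require Import all_classical all_reals all_analysis.
Set Implicit Arguments. Unset Strict Implicit. Unset Printing Implicit Defensive.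
Import Order.TTheory GRing.Theory Num.Theory.
Import numFieldNormedType.Exports.
Local Open Scope ring_scope.

Section Rothstein.
Variables (R : realType) (n K : nat).

(* Fibre of the exterior algebra bundle: /\^. R^K, an element being the
   family of its coefficients on the basis u_S = u_{s1} /\ ... /\ u_{sk},
   S = {s1 < ... < sk}. *)
Definition Grass := {ffun {set 'I_K} -> R}.

Definition blade (S : {set 'I_K}) : Grass := [ffun T : {set 'I_K} => (T == S)%:R].

Definition scal (c : R) : Grass := c *: blade finset.set0.

(* sign of u_S /\ u_T = sgn * u_(S u T) for disjoint S, T *)
Definition wsign (S T : {set 'I_K}) : R :=
  (-1) ^+ #|[set x : 'I_K * 'I_K | (x.1 \in S) && (x.2 \in T) && (x.2 < x.1)%N]|.

Definition wedge (x y : Grass) : Grass :=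
  [ffun W : {set 'I_K} => \sum_(S : {set 'I_K}) \sum_(T : {set 'I_K})
     (if (S :&: T == finset.set0) && (S :|: T == W) then wsign S T * x S * y T else 0)].

(* left interior product i(u^A) (u^A the dual frame) *)
Definition intl (A : 'I_K) (x : Grass) : Grass :=
  [ffun W : {set 'I_K} => if A \in W then 0
             else (-1) ^+ #|[set s in W | (s < A)%N]| * x (A |: W)].

(* j(u^A) psi = (-1)^(m-1) i(u^A) psi on degree m, extended linearly *)
Definition intj (A : 'I_K) (x : Grass) : Grass :=
  [ffun W : {set 'I_K} => (-1) ^+ #|W| * intl A x W].

(* derivation of /\^. R^K extending the endomorphism u_a |-> sum_b L a b u_b *)
Definition ext_der (L : 'I_K -> 'I_K -> R) (x : Grass) : Grass :=
  \sum_(S : {set 'I_K}) x S *: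
    \sum_(a in S) \sum_(b : 'I_K) L a b *:
       wedge (wedge (blade [set s in S | (s < a)%N]) (blade [set b]))
             (blade [set s in S | (a < s)%N]).

Definition ecoord (i : 'I_n) : 'rV[R]_n := delta_mx 0 i.

(* Christoffel symbols: Gam i A C q = Gamma^C_{iA}(q),
   i.e. nabla_{d/dx^i} u_A = sum_C Gamma^C_{iA} u_C *)
Definition chris := 'I_n -> 'I_K -> 'I_K -> 'rV[R]_n -> R.

Definition Esec := 'rV[R]_n -> 'I_K -> R.
Definition uE (A : 'I_K) : Esec := fun _ C => (A == C)%:R.
Definition nablaE (Gam : chris) (i : 'I_n) (s : Esec) : Esec :=
  fun q C => 'D_(ecoord i) (fun q' => s q' C) q + \sum_(A : 'I_K) s q A * Gam i A C q.

(* curvature components: R(d_i, d_j) u_A = sum_C R^C_{Aij} u_C,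
   R(X,Y) = [nabla_X, nabla_Y] - nabla_[X,Y], [d_i,d_j] = 0 *)
Definition curv (Gam : chris) (C A : 'I_K) (i j : 'I_n) (q : 'rV[R]_n) : R :=
  nablaE Gam i (nablaE Gam j (uE A)) q C - nablaE Gam j (nablaE Gam i (uE A)) q C.

(* local sections of /\^. tau^# E over T^*U, in bundle coordinates (q,p) *)
Definition Sec := 'rV[R]_n -> 'rV[R]_n -> Grass.

Definition nablaQ (Gam : chris) (i : 'I_n) (phi : Sec) : Sec :=
  fun q p => [ffun W : {set 'I_K} => 'D_(ecoord i) (fun q' => phi q' p W) q]
             + ext_der (fun a b => Gam i a b q) (phi q p).

Definition nablaP (i : 'I_n) (phi : Sec) : Sec :=
  fun q p => [ffun W : {set 'I_K} => 'D_(ecoord i) (fun p' => phi q p' W) p].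

(* Rothstein-Poisson bracket, local formula; h is the constant matrix (h_AB),
   invmx h = (h^AB) *)
Definition rbracket (h : 'M[R]_K) (Gam : chris) (phi psi : Sec) : Sec :=
  fun q p =>
    \sum_(i < n) (wedge (nablaQ Gam i phi q p) (nablaP i psi q p)
                  - wedge (nablaP i phi q p) (nablaQ Gam i psi q p))
    - (2%:R)^-1 *: \sum_(i < n) \sum_(j < n)
        wedge (wedge (\sum_(A : 'I_K) \sum_(B : 'I_K) \sum_(C : 'I_K)
                        (invmx h A B * curv Gam C A i j q)
                          *: wedge (blade [set B]) (blade [set C]))
                     (nablaP i phi q p))
              (nablaP j psi q p)
    + \sum_(A : 'I_K) \sum_(B : 'I_K) h A B *: wedge (intj A (phi q p)) (intl B (psi q p)).

Definition qsec (i : 'I_n) : Sec := fun q _ => scal (q 0 i).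
Definition usec (A : 'I_K) : Sec := fun _ _ => blade [set A].
Definition rsec (h : 'M[R]_K) (Gam : chris) (i : 'I_n) : Sec :=
  fun q p => scal (p 0 i)
    - (2%:R)^-1 *: \sum_(A : 'I_K) \sum_(B : 'I_K) \sum_(C : 'I_K)
         (invmx h A B * Gam i A C q) *: wedge (blade [set B]) (blade [set C]).
Definition csec (c : R) : Sec := fun _ _ => scal c.

(* nabla is metric for h, the frame having constant h_AB:
   0 = d_i h_AB = h(nabla_i u_A, u_B) + h(u_A, nabla_i u_B) *)
Definition metric_conn (U : set 'rV[R]_n) (h : 'M[R]_K) (Gam : chris) : Prop :=
  forall i A B q, U q ->
    \sum_(C : 'I_K) Gam i A C q * h C B + \sum_(C : 'I_K) Gam i B C q * h A C = 0.

End Rothstein.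

(* The sections q^i and tau^# u_A do not depend on p, and the interior products
   kill functions and contract u_B to the constant delta_AB; this gives all
   brackets among them.  The section r_i is p_i minus half the bivector of
   theta_i = h^-1 Gamma_i, and the metric condition says that Gamma_i h, hence
   theta_i, is skew.  Thus i(u^B) r_i is minus the B-th row of theta_i, and in
   {r_i, u_A} the connection term Gamma_iA^C u_C is cancelled by the
   contraction term, since h theta_i = Gamma_i.  In {r_i, r_j} the derivatives
   of the Christoffel symbols cancel against the curvature term, and what is
   left is the bivector of theta_i Gamma_j + theta_j Gamma_i; this matrix is
   symmetric, so its bivector vanishes. *)

From HB Require Import structures.
From mathcomp Require Import all_boot all_order all_algebra.
From mathcomp Require Import all_classical all_reals all_analysis.
From mathcomp Require Import ring.
Import Order.TTheory GRing.Theory Num.Theory.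
Import numFieldNormedType.Exports.
Local Open Scope ring_scope.
Set Implicit Arguments. Unset Strict Implicit. Unset Printing Implicit Defensive.

Lemma sum_deltaZ (R : nzRingType) (V : lmodType R) (T : finType) (a : T) (F : T -> V) :
  \sum_(t : T) (a == t)%:R *: F t = F a.
Proof.
rewrite (bigD1 a) //= eqxx scale1r big1 ?addr0 // => t nt.
by rewrite eq_sym (negbTE nt) scale0r.
Qed.

Lemma sum_deltaMr (R : nzRingType) (T : finType) (a : T) (F : T -> R) :
  \sum_(t : T) F t * (a == t)%:R = F a.
Proof.
rewrite (bigD1 a) //= eqxx mulr1 big1 ?addr0 // => t nt.
by rewrite eq_sym (negbTE nt) mulr0.
Qed.

Lemma sum_outer_mx (F : comNzRingType) (K : nat) (h M N : 'M[F]_K) :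
  \sum_A \sum_B h A B *: ((row A M)^T *m row B N) = M^T *m (h *m N).
Proof.
apply/matrixP => D E; rewrite summxE [RHS]mxE; apply: eq_bigr => A _.
rewrite summxE [(h *m N) A E]mxE mulr_sumr; apply: eq_bigr => B _.
by rewrite !mxE big_ord1 !mxE; ring.
Qed.

Section SkewAdjoint.
Context {F : fieldType} {K : nat} (h : 'M[F]_K).
Hypotheses (hT : h^T = h) (hU : h \in unitmx).
Implicit Types (G H : 'M[F]_K).

Lemma trmx_invmx_sym : (invmx h)^T = invmx h.
Proof. by rewrite trmx_inv hT. Qed.

Lemma trmx_mul_invmx G : (G *m h)^T = - (G *m h) -> G^T *m invmx h = - (invmx h *m G).
Proof.
move=> skG; have e : h *m G^T = - (G *m h) by rewrite -skG trmx_mul hT.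
by rewrite -[G^T](mulKmx hU) e mulmxN mulNmx -!mulmxA (mulmxV hU) mulmx1.
Qed.

Lemma invmx_mul_skew G : (G *m h)^T = - (G *m h) -> (invmx h *m G)^T = - (invmx h *m G).
Proof. by move=> skG; rewrite trmx_mul trmx_invmx_sym trmx_mul_invmx. Qed.

Lemma trmx_invmx_mul2 G H : (G *m h)^T = - (G *m h) -> (H *m h)^T = - (H *m h) ->
  (invmx h *m G *m H)^T = invmx h *m H *m G.
Proof.
move=> skG skH; rewrite trmx_mul invmx_mul_skew // mulmxN mulmxA trmx_mul_invmx //.
by rewrite mulNmx opprK.
Qed.

End SkewAdjoint.

Section ExteriorAlgebra.
Context {R : realType} {K : nat}.
Local Notation Grass := (Grass R K).
Local Notation blade := (@blade R K).
Local Notation scal := (scal (R := R) K).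
Implicit Types (x y : Grass) (S T : {set 'I_K}) (A B C : 'I_K).

Lemma scaleRE (c x : R) : c *: x = c * x. Proof. by []. Qed.

Lemma wedge_is_bilinear : bilinear_for
  (GRing.Scale.Law.clone _ _ *:%R _) (GRing.Scale.Law.clone _ _ *:%R _) (@wedge R K).
Proof.
split=> [y|x] c u v; apply/ffunP => W; rewrite !ffunE scaler_sumr -big_split;
  apply: eq_bigr => S _; rewrite scaler_sumr -big_split; apply: eq_bigr => T _.
all: by rewrite !ffunE; case: ifP => _ /=; rewrite ?scaler0 ?addr0 // !scaleRE; ring.
Qed.

HB.instance Definition _ :=
  bilinear_isBilinear.Build R Grass Grass Grass _ _ (@wedge R K) wedge_is_bilinear.

Lemma intl_is_linear A : linear (intl A : Grass -> Grass).
Proof.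
move=> c x y; apply/ffunP => W; rewrite !ffunE.
by case: ifP => _; rewrite ?scaler0 ?addr0 // !scaleRE; ring.
Qed.

HB.instance Definition _ A :=
  GRing.isLinear.Build R Grass Grass _ (intl A) (intl_is_linear A).

Lemma ext_der_is_linear (L : 'I_K -> 'I_K -> R) : linear (ext_der L : Grass -> Grass).
Proof.
move=> c x y; rewrite /ext_der scaler_sumr -big_split; apply: eq_bigr => S _ /=.
by rewrite !ffunE scalerDl scalerA.
Qed.

HB.instance Definition _ L :=
  GRing.isLinear.Build R Grass Grass _ (ext_der L) (ext_der_is_linear L).

Lemma wedgeZl c x y : wedge (c *: x) y = c *: wedge x y.
Proof. exact: linearZl. Qed.

Lemma wedgeZr c x y : wedge x (c *: y) = c *: wedge x y.
Proof. exact: linearZr_LR. Qed.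

Lemma grass_expand x : x = \sum_S x S *: blade S.
Proof.
apply/ffunP => W; rewrite sum_ffunE -[LHS](sum_deltaMr W x).
by apply: eq_bigr => S _; rewrite !ffunE scaleRE.
Qed.

Lemma wedge_blade S T :
  wedge (blade S) (blade T) =
  if S :&: T == finset.set0 then wsign R S T *: blade (S :|: T) else 0.
Proof.
apply/ffunP => W; rewrite !ffunE (bigD1 S) //= [X in _ + X]big1 ?addr0; last first.
  move=> S' /negbTE nS; apply: big1 => T' _.
  by rewrite !ffunE nS; case: ifP; rewrite // mulr0 mul0r.
rewrite (bigD1 T) //= [X in _ + X]big1 ?addr0; last first.
  by move=> T' /negbTE nT; rewrite !ffunE nT; case: ifP; rewrite // mulr0.
rewrite !ffunE !eqxx !mulr1; case: (S :&: T == finset.set0) => /=; last by rewrite ffunE.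
by rewrite !ffunE scaleRE [W == _]eq_sym; case: (_ == W); rewrite ?mulr1 ?mulr0.
Qed.

Lemma wsign0l T : wsign R finset.set0 T = 1.
Proof.
rewrite /wsign (_ : [set _ | _] = finset.set0) ?cards0 //.
by apply/finset.setP => -[a b]; rewrite !inE.
Qed.

Lemma wsign0r S : wsign R S finset.set0 = 1.
Proof.
rewrite /wsign (_ : [set _ | _] = finset.set0) ?cards0 //.
by apply/finset.setP => -[a b]; rewrite !inE andbF.
Qed.

Lemma wsign_set1 B C : wsign R [set B] [set C] = if (C < B)%N then -1 else 1.
Proof.
rewrite /wsign; case: ltnP => CB.
  rewrite (_ : [set _ | _] = [set (B, C)]) ?cards1 //.
  apply/finset.setP => -[a b]; rewrite !inE xpair_eqE /=.
  by case: (a =P B) => [->|] //=; case: (b =P C) => [->|] //=; rewrite CB.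
rewrite (_ : [set _ | _] = finset.set0) ?cards0 //.
apply/finset.setP => -[a b]; rewrite !inE /=.
by case: (a =P B) => [->|] //=; case: (b =P C) => [->|] //=; rewrite ltnNge CB.
Qed.

Lemma wedge_blade0l x : wedge (blade finset.set0) x = x.
Proof.
rewrite [in LHS](grass_expand x) linear_sumr [RHS]grass_expand.
apply: eq_bigr => S _; rewrite /= wedgeZr wedge_blade finset.set0I eqxx.
by rewrite wsign0l finset.set0U scale1r.
Qed.

Lemma wedge_blade0r x : wedge x (blade finset.set0) = x.
Proof.
rewrite [in LHS](grass_expand x) linear_sumlz [RHS]grass_expand.
apply: eq_bigr => S _; rewrite /= wedgeZl wedge_blade finset.setI0 eqxx.
by rewrite wsign0r finset.setU0 scale1r.
Qed.

Lemma wedge_scall c x : wedge (scal c) x = c *: x.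
Proof. by rewrite wedgeZl wedge_blade0l. Qed.

Lemma wedge_scalr c x : wedge x (scal c) = c *: x.
Proof. by rewrite wedgeZr wedge_blade0r. Qed.

Lemma wedge_blade1 B C :
  wedge (blade [set B]) (blade [set C]) =
  if B == C then 0 else (if (C < B)%N then -1 else 1) *: blade [set B; C].
Proof.
rewrite wedge_blade wsign_set1; case: (eqVneq B C) => [->|nBC].
  by rewrite finset.setIid; case: ifP => // /eqP/finset.setP/(_ C); rewrite !inE eqxx.
suff -> : [set B] :&: [set C] == finset.set0 by [].
by apply/eqP/finset.setP => x; rewrite !inE; case: eqVneq => // ->; rewrite (negbTE nBC).
Qed.

Lemma wedge_blade1C B C :
  wedge (blade [set B]) (blade [set C]) = - wedge (blade [set C]) (blade [set B]).
Proof.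
rewrite !wedge_blade1 eq_sym; case: eqVneq => [_|nCB]; first by rewrite oppr0.
rewrite finset.setUC -scaleNr; congr (_ *: _).
have : (C : nat) != B by apply: contraNneq nCB => /val_inj ->.
by rewrite neq_ltn => /orP[] lt; rewrite lt ltnNge ltnW ?opprK.
Qed.

End ExteriorAlgebra.

Section Multivectors.
Context {R : realType} {K : nat}.
Local Notation Grass := (Grass R K).
Local Notation blade := (@blade R K).
Implicit Types (a b : 'rV[R]_K) (X Y : 'M[R]_K) (A B C D : 'I_K).

Definition vec a : Grass := \sum_D a 0 D *: blade [set D].

Definition bivec X : Grass :=
  \sum_B \sum_C X B C *: wedge (blade [set B]) (blade [set C]).

Lemma vec_is_linear : linear vec.
Proof.
move=> c a b; rewrite /vec scaler_sumr -big_split; apply: eq_bigr => D _ /=.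
by rewrite !mxE scalerDl scalerA.
Qed.

HB.instance Definition _ := GRing.isLinear.Build R 'rV[R]_K Grass _ vec vec_is_linear.

Lemma bivec_is_linear : linear bivec.
Proof.
move=> c X Y; rewrite /bivec scaler_sumr -big_split; apply: eq_bigr => B _ /=.
rewrite scaler_sumr -big_split; apply: eq_bigr => C _ /=.
by rewrite !mxE scalerDl scalerA.
Qed.

HB.instance Definition _ := GRing.isLinear.Build R 'M[R]_K Grass _ bivec bivec_is_linear.

Lemma bivec_tr X : bivec X^T = - bivec X.
Proof.
rewrite /bivec exchange_big -sumrN; apply: eq_bigr => C _; rewrite -sumrN.
by apply: eq_bigr => B _; rewrite mxE wedge_blade1C scalerN.
Qed.

Lemma wedge_vec a b : wedge (vec a) (vec b) = bivec (a^T *m b).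
Proof.
rewrite /vec /bivec linear_sumlz; apply: eq_bigr => D _; rewrite linear_sumr.
apply: eq_bigr => E _; rewrite /= wedgeZl wedgeZr scalerA !mxE big_ord1.
by rewrite !mxE mulrC.
Qed.

End Multivectors.

Section Splitting.
Context {K : nat}.
Implicit Types (A B C : 'I_K).

Lemma split_set1 A :
  [set s in [set A] | (s < A)%N] = finset.set0 /\
  [set s in [set A] | (A < s)%N] = finset.set0.
Proof.
by split; apply/finset.setP => s; rewrite !inE; case: eqVneq => [->|]; rewrite /= ?ltnn.
Qed.

Lemma split_set2 B C : (B < C)%N ->
  [/\ [set s in [set B; C] | (s < B)%N] = finset.set0,
      [set s in [set B; C] | (B < s)%N] = [set C],
      [set s in [set B; C] | (s < C)%N] = [set B] &
      [set s in [set B; C] | (C < s)%N] = finset.set0].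
Proof.
move=> BC; have CB : (C < B)%N = false by rewrite ltnNge ltnW.
have nBC : (B == C) = false by apply: contraTF BC => /eqP ->; rewrite ltnn.
split; apply/finset.setP => s; rewrite !inE;
  (case: (eqVneq s B) => [->|nB] /=; [ | case: (eqVneq s C) => [->|nC] /=]);
  by rewrite ?ltnn ?BC ?CB ?nBC ?eqxx ?(negbTE nB) ?(negbTE nC) // eq_sym nBC.
Qed.

Lemma setD_set2 B C : B != C ->
  [set B; C] :\ B = [set C] /\ [set B; C] :\ C = [set B].
Proof.
move=> nBC; split; apply/finset.setP => s; rewrite !inE;
  case: (eqVneq s B) => [->|nB] /=; case: (eqVneq s C) => [e|nC] //=.
all: by rewrite ?(negbTE nBC) ?nBC.
Qed.

Lemma neq_ord_ltn B C : B != C -> (B < C)%N || (C < B)%N.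
Proof. by move=> nBC; rewrite -neq_ltn; apply: contraNneq nBC => /val_inj ->. Qed.

End Splitting.

Section Derivation.
Context {R : realType} {K : nat} (L : 'I_K -> 'I_K -> R).
Local Notation Grass := (Grass R K).
Local Notation blade := (@blade R K).
Local Notation Lm := (\matrix_(a, b) L a b).
Implicit Types (S : {set 'I_K}) (A B C D : 'I_K) (X : 'M[R]_K).

Lemma ext_der_blade S :
  ext_der L (blade S) =
  \sum_(a in S) \sum_b L a b *:
     wedge (wedge (blade [set s in S | (s < a)%N]) (blade [set b]))
           (blade [set s in S | (a < s)%N]).
Proof.
rewrite /ext_der (bigD1 S) //= [X in _ + X]big1 ?addr0; first by rewrite ffunE eqxx scale1r.
by move=> T /negbTE nT; rewrite ffunE nT scale0r.
Qed.

Lemma ext_der_scal c : ext_der L (scal K c) = 0.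
Proof. by rewrite linearZ /= ext_der_blade big_set0 scaler0. Qed.

Lemma ext_der_blade1 A : ext_der L (blade [set A]) = vec (\row_D L A D).
Proof.
rewrite ext_der_blade big_set1; case: (split_set1 A) => -> ->.
by apply: eq_bigr => b _; rewrite wedge_blade0l wedge_blade0r mxE.
Qed.

Lemma ext_der_blade2 B C : (B < C)%N ->
  ext_der L (blade [set B; C]) =
  \sum_D L B D *: wedge (blade [set D]) (blade [set C]) +
  \sum_D L C D *: wedge (blade [set B]) (blade [set D]).
Proof.
move=> BC; rewrite ext_der_blade big_setU1 /=; last first.
  by rewrite inE; apply: contraTN BC => /eqP ->; rewrite ltnn.
rewrite big_set1; case: (split_set2 BC) => -> -> -> ->.
by congr (_ + _); apply: eq_bigr => b _; rewrite ?wedge_blade0l ?wedge_blade0r.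
Qed.

Lemma ext_der_wedge_blade1 B C :
  ext_der L (wedge (blade [set B]) (blade [set C])) =
  \sum_D L B D *: wedge (blade [set D]) (blade [set C]) +
  \sum_D L C D *: wedge (blade [set B]) (blade [set D]).
Proof.
rewrite wedge_blade1; case: eqVneq => [<-|/neq_ord_ltn/orP[] lt].
- rewrite linear0 -big_split /=; symmetry; apply: big1 => D _.
  by rewrite (wedge_blade1C B D) scalerN subrr.
- by rewrite ltnNge ltnW // scale1r ext_der_blade2.
rewrite lt finset.setUC linearZ /= ext_der_blade2 // scaleN1r opprD addrC.
rewrite -!sumrN; congr (_ + _); apply: eq_bigr => b _.
  by rewrite (wedge_blade1C C b) scalerN opprK.
by rewrite (wedge_blade1C b B) scalerN opprK.
Qed.

Lemma ext_der_bivec X : ext_der L (bivec X) = bivec (Lm^T *m X + X *m Lm).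
Proof.
have -> : ext_der L (bivec X) =
   \sum_B \sum_C \sum_D (X B C * L B D) *: wedge (blade [set D]) (blade [set C]) +
   \sum_B \sum_C \sum_D (X B C * L C D) *: wedge (blade [set B]) (blade [set D]).
  rewrite linear_sum -big_split /=; apply: eq_bigr => B _.
  rewrite linear_sum -big_split /=; apply: eq_bigr => C _.
  rewrite linearZ /= ext_der_wedge_blade1 scalerDr !scaler_sumr.
  by congr (_ + _); apply: eq_bigr => D _; rewrite scalerA.
rewrite linearD; congr (_ + _).
  rewrite exchange_big /=; under eq_bigr => C _ do rewrite exchange_big /=.
  rewrite exchange_big /=; apply: eq_bigr => D _; apply: eq_bigr => C _.
  by rewrite !mxE scaler_suml; apply: eq_bigr => B _; rewrite !mxE mulrC.
apply: eq_bigr => B _; rewrite exchange_big /=; apply: eq_bigr => D _.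
by rewrite !mxE scaler_suml; apply: eq_bigr => C _; rewrite !mxE.
Qed.

End Derivation.

Section Interior.
Context {R : realType} {K : nat}.
Local Notation Grass := (Grass R K).
Local Notation blade := (@blade R K).
Implicit Types (x : Grass) (a : 'rV[R]_K) (S : {set 'I_K}) (A B C D : 'I_K) (X : 'M[R]_K).

Lemma intl_scal A (c : R) : intl A (scal K c) = 0.
Proof.
apply/ffunP => W; rewrite !ffunE; case: ifP => // AW.
rewrite ?ffunE (_ : (A |: W == finset.set0) = false) ?mulr0 ?scaleRE ?mulr0 //.
by apply/negbTE/eqP => /finset.setP /(_ A); rewrite !inE eqxx.
Qed.

Lemma intl_blade A S :
  intl A (blade S) =
  if A \in S then (-1) ^+ #|[set s in S | (s < A)%N]| *: blade (S :\ A) else 0.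
Proof.
apply/ffunP => W; rewrite !ffunE; case: ifP => AW.
  case: ifP => AS; rewrite !ffunE // (_ : (W == S :\ A) = false) ?scaleRE ?mulr0 //.
  by apply: contraTF AW => /eqP ->; rewrite !inE eqxx.
case: ifP => AS; last first.
  rewrite ffunE (_ : (A |: W == S) = false) ?mulr0 //.
  by apply: contraFF AS => /eqP <-; rewrite !inE eqxx.
rewrite !ffunE scaleRE; have [->|nW] := eqVneq W (S :\ A).
  rewrite finset.setD1K // eqxx (_ : [set s in S :\ A | _] = [set s in S | (s < A)%N]) //.
  by apply/finset.setP => s; rewrite !inE; case: eqVneq => [->|] //=; rewrite ltnn andbF.
rewrite (_ : (A |: W == S) = false) ?mulr0 //.
by apply: contraNF nW => /eqP <-; rewrite finset.setU1K ?AW.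
Qed.

Lemma intl_blade1 A B : intl A (blade [set B]) = scal K (A == B)%:R.
Proof.
rewrite intl_blade inE /scal; case: eqVneq => [->|_]; last by rewrite scale0r.
by rewrite (split_set1 B).1 cards0 expr0 scale1r finset.setDv scale1r.
Qed.

Lemma intl_blade2 A B C : (B < C)%N ->
  intl A (blade [set B; C]) = (A == B)%:R *: blade [set C] - (A == C)%:R *: blade [set B].
Proof.
move=> BC; have nBC : B != C by apply: contraTneq BC => ->; rewrite ltnn.
case: (split_set2 BC) => s1 _ s3 _; case: (setD_set2 nBC) => d1 d2.
rewrite intl_blade !inE; case: (eqVneq A B) => [->|nAB] /=.
  by rewrite s1 d1 cards0 expr0 (negbTE nBC) !scale1r scale0r subr0.
case: (eqVneq A C) => [->|nAC] /=; last by rewrite !scale0r subr0.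
by rewrite s3 d2 cards1 expr1 !scaleN1r scale1r scale0r sub0r.
Qed.

Lemma intl_wedge_blade1 A B C :
  intl A (wedge (blade [set B]) (blade [set C])) =
  (A == B)%:R *: blade [set C] - (A == C)%:R *: blade [set B].
Proof.
rewrite wedge_blade1; case: eqVneq => [<-|/neq_ord_ltn/orP[] lt].
- by rewrite linear0 subrr.
- by rewrite ltnNge ltnW // scale1r intl_blade2.
by rewrite lt finset.setUC linearZ /= intl_blade2 // scaleN1r opprB.
Qed.

Lemma intl_bivec A X : intl A (bivec X) = vec (row A (X - X^T)).
Proof.
rewrite /bivec /vec linear_sum.
under eq_bigr => B _ do rewrite linear_sum.
under eq_bigr => B _ do under eq_bigr => C _ do
  rewrite linearZ /= intl_wedge_blade1 scalerBr !scalerA.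
under eq_bigr => B _ do rewrite sumrB.
rewrite sumrB; under [RHS]eq_bigr => D _ do rewrite !mxE scalerBl.
rewrite sumrB; congr (_ - _).
  rewrite exchange_big /=; apply: eq_bigr => C _; rewrite -scaler_suml.
  by rewrite sum_deltaMr.
by apply: eq_bigr => B _; rewrite -scaler_suml sum_deltaMr.
Qed.

Lemma intj_vec A x a : intl A x = vec a -> intj A x = - vec a.
Proof.
move=> e; apply/ffunP => W; rewrite ffunE e /vec !ffunE !sum_ffunE mulr_sumr -sumrN.
apply: eq_bigr => D _; rewrite !ffunE !scaleRE.
case: (eqVneq W [set D]) => [->|_]; last by rewrite !mulr0 oppr0.
by rewrite cards1 expr1 !mulr1 mulN1r.
Qed.

Lemma intj_scal A (c : R) : intj A (scal K c) = 0.
Proof. by apply/ffunP => W; rewrite ffunE intl_scal !ffunE mulr0. Qed.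

Lemma intj_blade1 A B : intj A (blade [set B]) = scal K (A == B)%:R.
Proof.
apply/ffunP => W; rewrite ffunE intl_blade1 !ffunE !scaleRE.
by case: (eqVneq W finset.set0) => [->|_]; rewrite ?cards0 ?expr0 ?mul1r ?mulr0.
Qed.

End Interior.

Section Calculus.
Context {R : realType} {V : normedModType R}.

Lemma is_derive_sumf (T : finType) (F : T -> V -> R) (dF : T -> R) (x v : V) :
  (forall t, is_derive x v (F t) (dF t)) ->
  is_derive x v (fun y => \sum_t F t y) (\sum_t dF t).
Proof.
move=> dFt; rewrite (_ : (fun y => _) = \sum_t F t); last by apply: funext => y; rewrite fct_sumE.
by elim/big_ind2 : _ => // *; [exact: is_derive_cst | exact: is_deriveD].
Qed.

Lemma is_derive_coord n (x v : 'rV[R]_n) i : is_derive x v (fun y => y 0 i) (v 0 i).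
Proof.
have dM := @derivable_id R 'rV[R]_n x v.
apply: DeriveDef; first by move/derivable_mxP : dM => /(_ 0 i).
by have := derive_mx dM; rewrite derive_id => /(congr1 (fun M : 'rV[R]_n => M 0 i)); rewrite mxE.
Qed.

Lemma derive_affine_coord n (c a : R) (x v : 'rV[R]_n) i :
  'D_v (fun y : 'rV[R]_n => c + a * y 0 i) x = a * v 0 i.
Proof.
have [_ ->] := is_deriveD (is_derive_cst c x v) (is_deriveZ a (is_derive_coord x v i)).
by rewrite add0r.
Qed.

End Calculus.

Section LocalSections.
Context {R : realType} {n K : nat} (h : 'M[R]_K) (Gam : chris R n K).
Implicit Types (i j k : 'I_n) (A B C D : 'I_K) (q p : 'rV[R]_n).

Definition gamma k q : 'M[R]_K := \matrix_(A, C) Gam k A C q.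
Definition dgamma k i q : 'M[R]_K := \matrix_(A, C) 'D_(ecoord R k) (Gam i A C) q.
Definition theta i q : 'M[R]_K := (invmx h)^T *m gamma i q.

Lemma ecoordE k i : ecoord R k 0 i = (i == k)%:R.
Proof. by rewrite mxE eqxx. Qed.

Lemma bivec_tr_mul (H : 'M[R]_K) (T : 'I_K -> 'I_K -> R) :
  \sum_A \sum_B \sum_C (H A B * T A C) *: wedge (blade R [set B]) (blade R [set C]) =
  bivec (H^T *m \matrix_(A, C) T A C).
Proof.
rewrite /bivec exchange_big /=; apply: eq_bigr => B _.
rewrite exchange_big /=; apply: eq_bigr => C _.
by rewrite !mxE scaler_suml; apply: eq_bigr => A _; rewrite !mxE.
Qed.

Lemma rsec_bivec i q p : rsec h Gam i q p = scal K (p 0 i) - 2^-1 *: bivec (theta i q).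
Proof. by rewrite /rsec (bivec_tr_mul _ (fun A C => Gam i A C q)). Qed.

Lemma bivec_coefE (X : 'M[R]_K) W :
  bivec X W = \sum_B \sum_C wedge (blade R [set B]) (blade R [set C]) W * X B C.
Proof.
rewrite sum_ffunE; apply: eq_bigr => B _; rewrite sum_ffunE.
by apply: eq_bigr => C _; rewrite ffunE scaleRE mulrC.
Qed.

Lemma is_derive_bivec_coef (M : 'rV[R]_n -> 'M[R]_K) (dM : 'M[R]_K) x v W :
  (forall B C, is_derive x v (fun y => M y B C) (dM B C)) ->
  is_derive x v (fun y => bivec (M y) W) (bivec dM W).
Proof.
move=> dMBC; under eq_fun => y do rewrite bivec_coefE.
by rewrite bivec_coefE; do 2![apply: is_derive_sumf => ?].
Qed.

Lemma nablaP_qsec k i q p : nablaP k (qsec (R := R) K i) q p = 0.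
Proof. by apply/ffunP => W; rewrite ffunE [RHS]ffunE; exact: derive_cst. Qed.

Lemma nablaP_usec k A q p : nablaP k (usec (R := R) (n := n) A) q p = 0.
Proof. by apply/ffunP => W; rewrite ffunE [RHS]ffunE; exact: derive_cst. Qed.

Lemma nablaP_rsec k i q p : nablaP k (rsec h Gam i) q p = scal K (i == k)%:R.
Proof.
apply/ffunP => W; rewrite !ffunE scaleRE -ecoordE.
under eq_fun => p' do rewrite rsec_bivec [in X in X W]addrC !ffunE scaleRE mulrC.
by rewrite derive_affine_coord mulrC.
Qed.

Lemma nablaQ_qsec k i q p : nablaQ Gam k (qsec K i) q p = scal K (i == k)%:R.
Proof.
rewrite /nablaQ ext_der_scal addr0; apply/ffunP => W; rewrite !ffunE scaleRE -ecoordE.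
under eq_fun => q' do rewrite !ffunE scaleRE mulrC -[_ * _]add0r.
by rewrite derive_affine_coord mulrC.
Qed.

Lemma nablaQ_usec k A q p : nablaQ Gam k (usec A) q p = vec (row A (gamma k q)).
Proof.
rewrite /nablaQ ext_der_blade1 (_ : [ffun W => _] = 0) ?add0r.
  by congr vec; apply/rowP => D; rewrite !mxE.
by apply/ffunP => W; rewrite ffunE [RHS]ffunE; exact: derive_cst.
Qed.

Lemma is_derive_theta k i q B C :
  (forall A C, differentiable (Gam i A C) q) ->
  is_derive q (ecoord R k) (fun y => theta i y B C) (((invmx h)^T *m dgamma k i q) B C).
Proof.
move=> dG; rewrite mxE (_ : (fun y => _) = fun y => \sum_A (invmx h)^T B A * Gam i A C y).
  apply: is_derive_sumf => A.
  have dGv := derivableP (diff_derivable (v := ecoord R k) (dG A C)).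
  rewrite (_ : (fun y => _) = (invmx h)^T B A \*: Gam i A C) //.
  by apply: is_derive_eq (is_deriveZ _ dGv) _; rewrite [dgamma _ _ _ _ _]mxE.
by apply: funext => y; rewrite mxE; apply: eq_bigr => A _; rewrite [gamma _ _ _ _]mxE.
Qed.

Lemma nablaQ_rsec k i q p :
  (forall A C, differentiable (Gam i A C) q) ->
  nablaQ Gam k (rsec h Gam i) q p =
  - 2^-1 *: bivec ((invmx h)^T *m dgamma k i q
                   + ((gamma k q)^T *m theta i q + theta i q *m gamma k q)).
Proof.
move=> dG; rewrite /nablaQ [in X in _ + X]rsec_bivec linearB /= ext_der_scal sub0r.
rewrite linearZ /= ext_der_bivec !linearD /= !scaleNr !addrA.
congr (_ + _ + _); apply/ffunP => W; rewrite !ffunE scaleRE.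
under eq_fun => y do rewrite rsec_bivec !ffunE scaleRE.
have dtheta := is_derive_bivec_coef W (fun B C => is_derive_theta k B C dG).
have dcst := is_derive_cst (p 0 i * (W == finset.set0)%:R) q (ecoord R k).
by have [_ ->] := is_deriveB dcst (is_deriveZ 2^-1 dtheta); rewrite sub0r.
Qed.

Lemma nablaE_uE j A : nablaE Gam j (uE A) = fun q C => Gam j A C q.
Proof.
apply: funext => q; apply: funext => C; rewrite /nablaE derive_cst add0r.
by rewrite -[RHS](sum_deltaMr A (fun A' => Gam j A' C q)); apply: eq_bigr => A' _; rewrite mulrC.
Qed.

Lemma curv_mxE i j q :
  \matrix_(A, C) curv Gam C A i j q =
  dgamma i j q - dgamma j i q + gamma j q *m gamma i q - gamma i q *m gamma j q.
Proof.
apply/matrixP => A C; rewrite !mxE /curv !nablaE_uE /nablaE.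
have sumE k l : \sum_D gamma k q A D * gamma l q D C = \sum_D Gam k A D q * Gam l D C q.
  by apply: eq_bigr => D _; rewrite !mxE.
by rewrite !sumE /=; ring.
Qed.

Lemma intl_rsec B i q p :
  intl B (rsec h Gam i q p) = - 2^-1 *: vec (row B (theta i q - (theta i q)^T)).
Proof. by rewrite rsec_bivec linearB /= intl_scal sub0r linearZ /= intl_bivec scaleNr. Qed.

End LocalSections.

Section Brackets.
Context {R : realType} {n K : nat} (h : 'M[R]_K) (Gam : chris R n K).
Implicit Types (i j k : 'I_n) (A B C D : 'I_K) (q p : 'rV[R]_n) (phi psi : Sec R n K).

Lemma rbracket_nablaP0r phi psi q p : (forall k, nablaP k psi q p = 0) ->
  rbracket h Gam phi psi q p =
  - \sum_k wedge (nablaP k phi q p) (nablaQ Gam k psi q p)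
  + \sum_A \sum_B h A B *: wedge (intj A (phi q p)) (intl B (psi q p)).
Proof.
move=> psi_p; rewrite /rbracket [X in _ - _ *: X + _]big1 => [|k _]; last first.
  by rewrite big1 // => l _; rewrite psi_p linear0r.
rewrite scaler0 subr0.
by rewrite -sumrN; congr (_ + _); apply: eq_bigr => k _; rewrite psi_p linear0r sub0r.
Qed.

Lemma rbracket_nablaP0l phi psi q p : (forall k, nablaP k phi q p = 0) ->
  rbracket h Gam phi psi q p =
  \sum_k wedge (nablaQ Gam k phi q p) (nablaP k psi q p)
  + \sum_A \sum_B h A B *: wedge (intj A (phi q p)) (intl B (psi q p)).
Proof.
move=> phi_p; rewrite /rbracket [X in _ - _ *: X + _]big1 => [|k _]; last first.
  by rewrite big1 // => l _; rewrite phi_p linear0r linear0l.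
rewrite scaler0 subr0.
by congr (_ + _); apply: eq_bigr => k _; rewrite phi_p linear0l subr0.
Qed.

Lemma bracket_qsec_nablaP0 i psi q p : (forall k, nablaP k psi q p = 0) ->
  rbracket h Gam (qsec K i) psi q p = 0.
Proof.
move=> psi_p; rewrite rbracket_nablaP0r // big1 => [|k _]; last by rewrite nablaP_qsec linear0l.
by rewrite big1 ?oppr0 ?add0r // => A _; rewrite big1 // => B _; rewrite intj_scal linear0l scaler0.
Qed.

Lemma bracket_usec_usec A B q p : rbracket h Gam (usec A) (usec B) q p = scal K (h A B).
Proof.
rewrite rbracket_nablaP0r => [|k]; last exact: nablaP_usec.
rewrite big1 => [|k _]; last by rewrite nablaP_usec linear0l.
rewrite oppr0 add0r -[RHS](sum_deltaZ A (fun A' => scal K (h A' B))).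
apply: eq_bigr => A' _; rewrite -[RHS](sum_deltaZ B (fun B' => _ *: scal K (h A' B'))).
apply: eq_bigr => B' _; rewrite intj_blade1 intl_blade1 wedge_scall.
by rewrite /scal !scalerA (eq_sym A') (eq_sym B'); congr (_ *: _); ring.
Qed.

Lemma bracket_qsec_rsec i j q p :
  rbracket h Gam (qsec K i) (rsec h Gam j) q p = scal K (i == j)%:R.
Proof.
rewrite rbracket_nablaP0l => [|k]; last exact: nablaP_qsec.
rewrite [X in _ + X]big1 ?addr0 => [|A _]; last first.
  by rewrite big1 // => B _; rewrite intj_scal linear0l scaler0.
under eq_bigr => k _ do rewrite nablaQ_qsec nablaP_rsec wedge_scall.
rewrite -[RHS](sum_deltaZ i (fun k => scal K (k == j)%:R)).
by apply: eq_bigr => k _; rewrite (eq_sym j).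
Qed.

Lemma rbracket_rsecE i j q p :
  rbracket h Gam (rsec h Gam i) (rsec h Gam j) q p =
  nablaQ Gam j (rsec h Gam i) q p - nablaQ Gam i (rsec h Gam j) q p
  - 2^-1 *: bivec ((invmx h)^T *m \matrix_(A, C) curv Gam C A i j q)
  + \sum_A \sum_B h A B *: wedge (intj A (rsec h Gam i q p)) (intl B (rsec h Gam j q p)).
Proof.
rewrite /rbracket; congr (_ - _ *: _ + _).
  under eq_bigr => k _ do rewrite !nablaP_rsec wedge_scalr wedge_scall.
  by rewrite sumrB; congr (_ - _); apply: sum_deltaZ.
under eq_bigr => k _ do under eq_bigr => l _ do rewrite !nablaP_rsec !wedge_scalr.
under eq_bigr => k _ do rewrite sum_deltaZ.
by rewrite sum_deltaZ (bivec_tr_mul _ (fun A C => curv Gam C A i j q)).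
Qed.

End Brackets.

Section MetricBrackets.
Context {R : realType} {n K : nat} (U : set 'rV[R]_n) (h : 'M[R]_K) (Gam : chris R n K).
Hypotheses (hT : h^T = h) (hU : h \in unitmx) (mc : metric_conn U h Gam).
Variable q : 'rV[R]_n.
Hypothesis Uq : U q.
Implicit Types (i j k : 'I_n) (A B C D : 'I_K) (p : 'rV[R]_n).

Lemma gamma_mul_skew k : (gamma Gam k q *m h)^T = - (gamma Gam k q *m h).
Proof.
apply/matrixP => A B; rewrite !mxE; apply/eqP; rewrite -subr_eq0 opprK; apply/eqP.
rewrite -[RHS](mc k A B Uq) addrC; congr (_ + _); apply: eq_bigr => C _.
  by rewrite !mxE.
by rewrite !mxE -[in RHS]hT mxE.
Qed.

Lemma thetaE k : theta h Gam k q = invmx h *m gamma Gam k q.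
Proof. by rewrite /theta trmx_invmx_sym. Qed.

Lemma theta_skew k : (theta h Gam k q)^T = - theta h Gam k q.
Proof. by rewrite thetaE invmx_mul_skew // gamma_mul_skew. Qed.

Lemma mul_theta k : h *m theta h Gam k q = gamma Gam k q.
Proof. by rewrite thetaE mulKVmx. Qed.

Lemma intl_rsec_skew B i p : intl B (rsec h Gam i q p) = - vec (row B (theta h Gam i q)).
Proof.
rewrite intl_rsec theta_skew opprK !linearD /= -mulr2n -scaler_nat scalerA mulrN.
by rewrite mulfV ?pnatr_eq0 // scaleN1r.
Qed.

Lemma intj_rsec A i p : intj A (rsec h Gam i q p) = vec (row A (theta h Gam i q)).
Proof.
have := intl_rsec_skew A i p; rewrite -linearN => /intj_vec ->.
by rewrite linearN opprK.
Qed.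

Lemma bracket_rsec_usec i A p : rbracket h Gam (rsec h Gam i) (usec A) q p = 0.
Proof.
rewrite rbracket_nablaP0r => [|k]; last exact: nablaP_usec.
under eq_bigr => k _ do rewrite nablaP_rsec nablaQ_usec wedge_scall.
rewrite sum_deltaZ; apply/eqP; rewrite addrC subr_eq0; apply/eqP.
under eq_bigr => A' _ do under eq_bigr => B _ do
  rewrite intj_rsec intl_blade1 wedge_scalr scalerA mulrC -scalerA.
rewrite -(mul_theta i) row_mul mulmx_sum_row linear_sum; apply: eq_bigr => A' _.
under eq_bigr => B _ do rewrite eq_sym.
have hA'A : h A' A = h A A' by rewrite -{1}hT mxE.
by rewrite sum_deltaZ linearZ /= mxE hA'A.
Qed.

Lemma bracket_rsec_rsec i j p :
  (forall k A C, differentiable (Gam k A C) q) ->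
  rbracket h Gam (rsec h Gam i) (rsec h Gam j) q p = 0.
Proof.
move=> dG; rewrite rbracket_rsecE (nablaQ_rsec h j p (dG i)) (nablaQ_rsec h i p (dG j)).
rewrite curv_mxE.
under eq_bigr => A _ do under eq_bigr => B _ do
  rewrite intj_rsec intl_rsec_skew linearNr /= wedge_vec scalerN -linearZ /=.
under eq_bigr => A _ do rewrite sumrN -linear_sum /=.
rewrite sumrN -linear_sum /= sum_outer_mx mul_theta.
have trgamma_theta k l :
    (gamma Gam k q)^T *m theta h Gam l q = - (theta h Gam k q *m gamma Gam l q).
  by rewrite !thetaE mulmxA (trmx_mul_invmx hT hU (gamma_mul_skew k)) mulNmx.
have invmx_gamma2 k l :
    invmx h *m (gamma Gam k q *m gamma Gam l q) = theta h Gam k q *m gamma Gam l q.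
  by rewrite thetaE mulmxA.
have theta_gamma_tr :
    theta h Gam j q *m gamma Gam i q = (theta h Gam i q *m gamma Gam j q)^T.
  by rewrite !thetaE (trmx_invmx_mul2 hT hU (gamma_mul_skew i) (gamma_mul_skew j)).
rewrite trmx_invmx_sym // mulmxBr mulmxDr mulmxBr !invmx_gamma2 !trgamma_theta.
rewrite theta_skew mulNmx theta_gamma_tr.
(* only bivec (invmx h *m dgamma _ _ q) and bivec (theta i q *m gamma j q) remain *)
rewrite !(linearD (@bivec R K)) !(linearN (@bivec R K)) /= !bivec_tr.
by apply/ffunP => W; rewrite !ffunE !scaleRE; field.
Qed.

End MetricBrackets.

Theorem mainTheorem9 (R : realType) (n K : nat)
  (U : set 'rV[R]_n) (h : 'M[R]_K) (Gam : chris R n K) :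
  open U ->
  h^T = h -> h \in unitmx ->
  (forall i A C q, U q -> differentiable (Gam i A C) q) ->
  metric_conn U h Gam ->
  forall q p : 'rV[R]_n, U q ->
    (forall i j : 'I_n,
        rbracket h Gam (qsec K i) (rsec h Gam j) q p = scal K ((i == j)%:R)) /\
    (forall A B : 'I_K,
        rbracket h Gam (usec A) (usec B) q p = scal K (h A B)) /\
    (forall i j : 'I_n, rbracket h Gam (qsec K i) (qsec K j) q p = 0) /\
    (forall (i : 'I_n) (A : 'I_K), rbracket h Gam (qsec K i) (usec A) q p = 0) /\
    (forall i j : 'I_n, rbracket h Gam (rsec h Gam i) (rsec h Gam j) q p = 0) /\
    (forall (i : 'I_n) (A : 'I_K), rbracket h Gam (rsec h Gam i) (usec A) q p = 0).
Proof.
(* The identities are pointwise. *)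
move=> _ hT hU dG mc q p Uq.
split; first by move=> i j; exact: bracket_qsec_rsec.
split; first by move=> A B; exact: bracket_usec_usec.
split; first by move=> i j; apply: bracket_qsec_nablaP0 => k; exact: nablaP_qsec.
split; first by move=> i A; apply: bracket_qsec_nablaP0 => k; exact: nablaP_usec.
split; first by move=> i j; apply: (bracket_rsec_rsec hT hU mc Uq) => k A C; exact: dG.
by move=> i A; exact: (bracket_rsec_usec hT hU mc Uq).
Qed.
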